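(* Let $v:2^N\to\mathbb{R}_+$ be a gross substitutes valuation over a finite set $N$. Let $A,B\subseteq N$ be disjoint and $j\in N\setminus(A\cup B)$. Assume that $v(\{i\}\mid A\cup\{j\})=0$ for all $i\in B$ and that $0\le v(\{j\}\mid A)-x<v(B\mid A)$ for some $x\ge0$. Then there is $i\in B$ such that $v(\{j\}\mid A)-x<v(\{i\}\mid A)$.
   Context: Valuations are monotone functions $v:2^N\to\mathbb{R}_+$ with $v(\emptyset)=0$, $N=[n]$. Marginal value: $v(T\mid S)=v(S\cup T)-v(S)$. For a price vector $p\in\mathbb{R}^n_+$, $p(S)=\sum_{j\in S}p_j$ and $D(v;p)=\arg\max_{S\subseteq N}(v(S)-p(S))$. The valuation $v$ is gross substitutes if for every price vector $p$, every $S\in D(v;p)$ and every price vector $p'\ge p$ (coordinatewise), there is $T\in D(v;p')$ with $S\cap\{j: p_j=p'_j\}\subseteq T$. *)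

From HB Require Import structures.
From mathcomp Require Import all_boot all_order all_algebra.
From mathcomp Require Import reals.
Set Implicit Arguments. Unset Strict Implicit. Unset Printing Implicit Defensive.
Import Order.TTheory GRing.Theory Num.Theory.
Local Open Scope ring_scope.

(* Ground set N = [n] is the finite type 'I_n; valuations are maps {set 'I_n} -> R. *)
Section GS.
Variables (R : realType) (n : nat).

Definition valuation (v : {set 'I_n} -> R) : Prop :=
  [/\ v set0 = 0,
      (forall S : {set 'I_n}, 0 <= v S) &
      (forall S T : {set 'I_n}, S \subset T -> v S <= v T)].

Definition marg (v : {set 'I_n} -> R) (T S : {set 'I_n}) : R := v (S :|: T) - v S.

Definition price (p : 'I_n -> R) (S : {set 'I_n}) : R := \sum_(j in S) p j.

Definition in_demand (v : {set 'I_n} -> R) (p : 'I_n -> R) (S : {set 'I_n}) : Prop :=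
  forall T : {set 'I_n}, v T - price p T <= v S - price p S.

Definition gross_substitutes (v : {set 'I_n} -> R) : Prop :=
  valuation v /\
  forall (p p' : 'I_n -> R),
    (forall j, 0 <= p j) -> (forall j, 0 <= p' j) ->
    (forall j, p j <= p' j) ->
    forall S : {set 'I_n}, in_demand v p S ->
      exists T : {set 'I_n}, in_demand v p' T /\ [set j in S | p j == p' j] \subset T.

End GS.

From HB Require Import structures.
From mathcomp Require Import all_boot all_order all_algebra.
From mathcomp Require Import reals.
From mathcomp.algebra_tactics Require Import lra.
Import Order.TTheory GRing.Theory Num.Theory.
Local Open Scope ring_scope.

Set Implicit Arguments.
Unset Strict Implicit.
Unset Printing Implicit Defensive.

(* Price A at 0, j at x, every item of B at c := (v(B | A) - (v(j | A) - x)) / (|B| + 1)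
   and all other items prohibitively.  Then A ∪ B beats every subset of A ∪ {j}, so any
   demanded bundle S contains some i ∈ B.  Raising the prices of B \ {i} prohibitively,
   gross substitutes yields a demanded T ∋ i.  T cannot contain j, because i adds nothing
   to A ∪ {j} but costs c > 0; hence T ⊆ A ∪ {i} and comparing T with A ∪ {j} gives
   v(j | A) - x <= v(i | A) - c. *)

Section Demand.
Variables (R : realType) (n : nat) (v : {set 'I_n} -> R) (p : 'I_n -> R).
Implicit Types (S T U W : {set 'I_n}) (k l : 'I_n).

Lemma price_set1 k : price p [set k] = p k.
Proof. by rewrite /price big_set1. Qed.

Lemma price_set2 k l : k != l -> price p [set k; l] = p k + p l.
Proof. by move=> kl; rewrite /price big_setU1 ?big_set1 // in_set1. Qed.

Lemma in_demand_exists : exists S, in_demand v p S.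
Proof.
have [S _ maxS] := @arg_maxP _ _ {set 'I_n} set0 predT (fun S => v S - price p S) isT.
by exists S => T; apply: maxS.
Qed.

Hypotheses (vval : valuation v) (p_ge0 : forall k, 0 <= p k).

Lemma price_subset S T : S \subset T -> price p S <= price p T.
Proof.
move=> sST; rewrite /price [X in _ <= X](big_setID S) /= (setIidPr sST).
by rewrite lerDl sumr_ge0.
Qed.

Lemma utility_le W S U :
  W \subset S -> S \subset U -> v S - price p S <= v U - price p W.
Proof. by case: vval => _ _ vmon sWS sSU; rewrite lerB ?vmon ?price_subset. Qed.

Lemma in_demand_subset U S :
  in_demand v p S -> (forall k, k \notin U -> v setT < p k) -> S \subset U.
Proof.
case: vval => _ v_ge0 vmon dS pU; apply/subsetP => k kS; apply/negPn/negP => kU.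
have := dS (S :\ k); rewrite /price (big_setD1 k kS) /= -/(price p (S :\ k)).
by have := vmon _ _ (subsetT S); have := v_ge0 (S :\ k); have := pU k kU; lra.
Qed.

End Demand.

Section Witness.
Variables (R : realType) (n : nat) (v : {set 'I_n} -> R).
Variables (A B : {set 'I_n}) (j : 'I_n) (x : R).
Implicit Types (S T : {set 'I_n}) (i k : 'I_n).
Hypotheses (vGS : gross_substitutes v) (dAB : [disjoint A & B]).
Hypotheses (jA : j \notin A) (jB : j \notin B).
Hypothesis margB0 : forall i, i \in B -> marg v [set i] (A :|: [set j]) = 0.
Hypothesis x_ge0 : 0 <= x.
Hypothesis surplus_ge0 : 0 <= marg v [set j] A - x.
Hypothesis surplus_lt : marg v [set j] A - x < marg v B A.

Let vval : valuation v. Proof. by case: vGS. Qed.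

Let c := (marg v B A - (marg v [set j] A - x)) / (#|B|%:R + 1).
Let M := v setT + 1.

Let p k := if k \in A then 0 else if k == j then x else if k \in B then c else M.
Let p' i k := if k \in B :\ i then p k + M else p k.

Let c_gt0 : 0 < c.
Proof. by rewrite divr_gt0 ?subr_gt0 // ltr_wpDl. Qed.

Let c_card_lt : c * #|B|%:R < marg v B A - (marg v [set j] A - x).
Proof.
have cE : c * (#|B|%:R + 1) = marg v B A - (marg v [set j] A - x).
  by rewrite divfK // lt0r_neq0 // ltr_wpDl.
by have := c_gt0; lra.
Qed.

Let v_lt_M S : v S < M.
Proof. by case: vval => _ _ vmon; rewrite /M ltr_pwDr ?vmon ?subsetT. Qed.

Let M_gt0 : 0 < M.
Proof. by apply: le_lt_trans (v_lt_M set0); case: vval. Qed.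

Let p_ge0 k : 0 <= p k.
Proof.
rewrite /p; case: ifP => // _; case: ifP => // _.
by case: ifP => _; apply: ltW; [apply: c_gt0 | apply: M_gt0].
Qed.

Let p'_ge0 i k : 0 <= p' i k.
Proof. by rewrite /p'; case: ifP => _; [apply: addr_ge0 (ltW M_gt0) |]; apply: p_ge0. Qed.

Let p_le_p' i k : p k <= p' i k.
Proof. by rewrite /p'; case: ifP => _ //; rewrite lerDl (ltW M_gt0). Qed.

Let p_B k : k \in B -> p k = c.
Proof.
move=> kB; rewrite /p (disjointFl dAB kB) kB; case: eqP => // kj.
by move: jB; rewrite -kj kB.
Qed.

Let price_AB : price p (A :|: B) = c * #|B|%:R.
Proof.
rewrite /price (eq_bigl [predU A & B]); last by move=> k; rewrite !inE.
rewrite bigU //= big1 ?add0r => [|k kA]; last by rewrite /p kA.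
by rewrite (eq_bigr (fun _ => c)) ?sumr_const ?mulr_natr // => k /p_B.
Qed.

Lemma demanded_meets_B S : in_demand v p S -> exists2 i, i \in B & i \in S.
Proof.
move=> dS; have [/eqP SB0 | /set0Pn [i]] := boolP (S :&: B == set0); last first.
  by rewrite inE => /andP[iS iB]; exists i.
have sSAj : S \subset A :|: [set j].
  have : S \subset A :|: [set j] :|: B.
    apply: (in_demand_subset vval dS) => k; rewrite !inE.
    case/norP=> /norP[kA kj] kB; rewrite /p (negbTE kA) (negbTE kj) (negbTE kB).
    exact: v_lt_M.
  by move=> sS; rewrite -(setIidPl sS) setIUr SB0 setU0 subsetIr.
have uS : v S - price p S <= v (A :|: [set j]) - x.
  have pj : p j = x by rewrite /p (negbTE jA) eqxx.
  case jS: (j \in S).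
    by rewrite -pj -price_set1; apply: (utility_le vval p_ge0); rewrite ?sub1set.
  have sSA : S \subset A.
    apply/subsetP => k kS; move/subsetP: sSAj => /(_ k kS); rewrite !inE.
    by case/orP => // /eqP kj; move: jS; rewrite -kj kS.
  have := utility_le vval p_ge0 (sub0set S) sSA; rewrite /price big_set0.
  by move: surplus_ge0; rewrite /marg; lra.
by have := dS (A :|: B); rewrite price_AB; have := c_card_lt; rewrite /marg; lra.
Qed.

Lemma surplus_lt_marg i T : i \in B -> in_demand v (p' i) T -> i \in T ->
  marg v [set j] A - x < marg v [set i] A.
Proof.
move=> iB dT iT; have ij : i != j by apply: contraNneq jB => <-.
have p'i : p' i i = c by rewrite /p' setD11 p_B.
have p'j : p' i j = x by rewrite /p' !inE (negbTE jB) andbF /p (negbTE jA) eqxx.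
have sT : T \subset A :|: [set j; i].
  apply: (in_demand_subset vval dT) => k; rewrite !inE.
  case/norP=> kA /norP[kj ki]; rewrite /p' !inE ki /= /p (negbTE kA) (negbTE kj).
  case: (k \in B); last exact: v_lt_M.
  exact: ltr_wpDl (ltW c_gt0) (v_lt_M _).
have uAj : v (A :|: [set j]) - x <= v T - price (p' i) T.
  have := dT (A :|: [set j]); congr (_ - _ <= _).
  rewrite setUC /price big_setU1 //= big1 ?addr0 // => k kA.
  by rewrite /p' !inE (disjointFr dAB kA) andbF /p kA.
have jT : j \notin T.
  apply/negP => jT; have := utility_le vval (p'_ge0 i) _ sT.
  have -> : A :|: [set j; i] = A :|: [set j] :|: [set i] by rewrite setUA.
  move/eqP: (margB0 iB); rewrite /marg subr_eq0 => /eqP ->.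
  move/(_ [set j; i]); rewrite price_set2 1?eq_sym // p'i p'j.
  have -> : [set j; i] \subset T by rewrite subUset !sub1set jT iT.
  by have := c_gt0; lra.
have sTAi : T \subset A :|: [set i].
  apply/subsetP => k kT; move/subsetP: sT => /(_ k kT); rewrite !inE.
  case/orP => [-> // | /orP[/eqP kj | ->]]; rewrite ?orbT //.
  by move: jT; rewrite -kj kT.
have := utility_le vval (p'_ge0 i) _ sTAi; move/(_ [set i]).
rewrite sub1set iT price_set1 p'i => /(_ isT).
by have := c_gt0; move: uAj; rewrite /marg; lra.
Qed.

Lemma gross_substitutes_witness :
  exists2 i, i \in B & marg v [set j] A - x < marg v [set i] A.
Proof.
have [S dS] := in_demand_exists v p.
have [i iB iS] := demanded_meets_B dS.
have [T [dT sST]] := vGS.2 p (p' i) p_ge0 (p'_ge0 i) (p_le_p' i) S dS.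
exists i => //; apply: surplus_lt_marg dT _ => //.
by move/subsetP: sST; apply; rewrite inE iS /p' setD11 eqxx.
Qed.

End Witness.

Theorem mainTheorem8 (R : realType) (n : nat) (v : {set 'I_n} -> R)
  (A B : {set 'I_n}) (j : 'I_n) (x : R) :
  gross_substitutes v ->
  [disjoint A & B] ->
  j \notin A :|: B ->
  (forall i, i \in B -> marg v [set i] (A :|: [set j]) = 0) ->
  0 <= x ->
  0 <= marg v [set j] A - x ->
  marg v [set j] A - x < marg v B A ->
  exists2 i, i \in B & marg v [set j] A - x < marg v [set i] A.
Proof.
move=> vGS dAB; rewrite in_setU negb_or => /andP[jA jB].
exact: gross_substitutes_witness.
Qed.
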